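(* Fix $\epsilon>0$, $\psi$ as in the context, and $\eta>0$ small enough that for $\lambda\in P(\epsilon,\eta)$ the cuts of $h_\lambda$ lie outside the closed unit disk. There is a constant $C$, depending only on $p,\epsilon,\psi,\eta$, such that for all $R>1$ and all $\lambda\in P(\epsilon,\eta)$, $$\oint_{\Gamma_R}|g_\lambda(u)|\,\Big(\frac{1}{1+|u|}\Big)^{2+\frac1p}\,|du|\le C\,|\lambda|^{\frac1{4p^2}}.$$
   Context: Fix an integer $p\ge2$. Let $T_p(z)$ be the Fuss–Catalan function: the unique solution of $zT^p-T+1=0$ analytic on $\mathbb C\setminus[(p-1)^{p-1}/p^p,\infty)$ with $T_p(0)=1$. Square roots are principal branches. For $\lambda\in\mathbb C$ set $f_\lambda(u)=\sqrt{T_p(-\lambda u^{2p-2})}$, $h_\lambda(u)=uf_\lambda(u)$ and $g_\lambda(u)=h_\lambda(u)-u$. For $\epsilon,\eta>0$ let $P(\epsilon,\eta)=\{\lambda\in\mathbb C:0<|\lambda|<\eta,\ |\arg\lambda|<\pi-\epsilon\}$. The function $h_\lambda$ is analytic away from cuts lying on the rays $\arg u=\frac{\pi-\arg\lambda}{2p-2}+\frac{k\pi}{p-1}$ ($k=-p+2,\dots,p-1$), at $|u|\ge|\lambda|^{-1/(2p-2)}(p-1)^{1/2}p^{-p/(2p-2)}$. Fix an angle $\psi\in(0,\pi/4)$, small enough (depending on $\epsilon,p$) that for every $\lambda$ with $|\arg\lambda|\le\pi-\epsilon$ these rays avoid the double sector $\{|\arg u|\le\psi\}\cup\{|\arg(-u)|\le\psi\}$.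 For $R>1$, the keyhole contour $\Gamma_R$ is the positively oriented boundary of $$D_R=\{|u|<R\}\cap\big(\{|u|<1\}\cup\{|\arg u|<\psi\}\cup\{|\arg(-u)|<\psi\}\big).$$ *)

From Stdlib Require Import Reals Lra ClassicalEpsilon.
Open Scope R_scope.

Record CC := mkCC { Re : R; Im : R }.

Definition C0 : CC := mkCC 0 0.
Definition C1 : CC := mkCC 1 0.
Definition RtoC (x : R) : CC := mkCC x 0.
Definition Cadd (z w : CC) : CC := mkCC (Re z + Re w) (Im z + Im w).
Definition Copp (z : CC) : CC := mkCC (- Re z) (- Im z).
Definition Csub (z w : CC) : CC := Cadd z (Copp w).
Definition Cmul (z w : CC) : CC :=
  mkCC (Re z * Re w - Im z * Im w) (Re z * Im w + Im z * Re w).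
Fixpoint Cpow (z : CC) (n : nat) : CC :=
  match n with O => C1 | S m => Cmul z (Cpow z m) end.
Definition Cnorm (z : CC) : R := sqrt (Re z * Re z + Im z * Im z).
Definition Cinv (z : CC) : CC :=
  let d := Re z * Re z + Im z * Im z in mkCC (Re z / d) (- Im z / d).
Definition Cdiv (z w : CC) : CC := Cmul z (Cinv w).

(* principal argument, with values in (-PI, PI] *)
Definition Carg (z : CC) : R :=
  let x := Re z in let y := Im z in
  if Rlt_dec 0 x then atan (y / x)
  else if Rlt_dec x 0 then
         (if Rle_dec 0 y then atan (y / x) + PI else atan (y / x) - PI)
  else if Rlt_dec 0 y then PI / 2
  else if Rlt_dec y 0 then - (PI / 2) else 0.

(* principal square root (branch cut on the negative real axis) *)
Definition Csqrt (z : CC) : CC :=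
  let x := Re z in let y := Im z in
  mkCC (sqrt ((Cnorm z + x) / 2))
       ((if Rle_dec 0 y then 1 else -1) * sqrt ((Cnorm z - x) / 2)).

Definition polar (r t : R) : CC := mkCC (r * cos t) (r * sin t).

Definition Cderiv_at (f : CC -> CC) (z l : CC) : Prop :=
  forall e, 0 < e -> exists d, 0 < d /\
    forall h, h <> C0 -> Cnorm h < d ->
      Cnorm (Csub (Cdiv (Csub (f (Cadd z h)) (f z)) h) l) < e.
Definition holomorphic_at (f : CC -> CC) (z : CC) : Prop :=
  exists l, Cderiv_at f z l.

(* branch point (p-1)^(p-1)/p^p and the slit plane C \ [rho, +oo) *)
Definition FC_rho (p : nat) : R := (INR p - 1) ^ (p - 1) / INR p ^ p.
Definition in_slit_plane (p : nat) (z : CC) : Prop :=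
  ~ (Im z = 0 /\ FC_rho p <= Re z).

(* T is the Fuss-Catalan function T_p: analytic on the slit plane, T(0)=1,
   and z T^p - T + 1 = 0 there (this characterizes T_p uniquely on the slit plane). *)
Definition is_FussCatalan (p : nat) (T : CC -> CC) : Prop :=
  T C0 = C1 /\
  (forall z, in_slit_plane p z -> holomorphic_at T z) /\
  (forall z, in_slit_plane p z ->
     Cadd (Csub (Cmul z (Cpow (T z) p)) (T z)) C1 = C0).

Definition f_lam (p : nat) (T : CC -> CC) (lam u : CC) : CC :=
  Csqrt (T (Copp (Cmul lam (Cpow u (2 * p - 2))))).
Definition h_lam (p : nat) (T : CC -> CC) (lam u : CC) : CC := Cmul u (f_lam p T lam u).
Definition g_lam (p : nat) (T : CC -> CC) (lam u : CC) : CC := Csub (h_lam p T lam u) u.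

Definition inP (eps eta : R) (lam : CC) : Prop :=
  0 < Cnorm lam < eta /\ Rabs (Carg lam) < PI - eps.

(* Total Riemann integral: the value of RiemannInt when f is Riemann integrable
   on [a,b] (proof-irrelevant by RiemannInt_P5). *)
Definition RInt (f : R -> R) (a b : R) : R :=
  epsilon (inhabits 0)
    (fun v => exists pr : Riemann_integrable f a b, RiemannInt pr = v).

(* Arc-length integral  \oint_{Gamma_R} F |du|  over the keyhole contour
   Gamma_R = boundary of D_R, split into its pieces:
   - two unit-circle arcs  psi <= arg u <= pi - psi,  -(pi-psi) <= arg u <= -psi,
   - four radial segments 1 <= |u| <= R along arg u = psi, -psi, pi-psi, -(pi-psi),
   - two arcs of radius R: |arg u| <= psi and |arg(-u)| <= psi. *)
Definition keyhole_arclength (psi Rr : R) (F : CC -> R) : R :=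
  RInt (fun t => F (polar 1 t)) psi (PI - psi)
  + RInt (fun t => F (polar 1 t)) (- (PI - psi)) (- psi)
  + RInt (fun r => F (polar r psi)) 1 Rr
  + RInt (fun r => F (polar r (- psi))) 1 Rr
  + RInt (fun r => F (polar r (PI - psi))) 1 Rr
  + RInt (fun r => F (polar r (- (PI - psi)))) 1 Rr
  + RInt (fun t => Rr * F (polar Rr t)) (- psi) psi
  + RInt (fun t => Rr * F (polar Rr t)) (PI - psi) (PI + psi).

Definition in_double_sector (psi : R) (u : CC) : Prop :=
  Rabs (Carg u) <= psi \/ Rabs (Carg (Copp u)) <= psi.

(* the cut rays of h_lambda: arg u = (pi - arg lam)/(2p-2) + k pi/(p-1),
   k = -p+2, ..., p-1 *)
Definition cut_ray_angle (p : nat) (lam : CC) (k : Z) : R :=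
  (PI - Carg lam) / (2 * INR p - 2) + IZR k * PI / (INR p - 1).

(** Write z = -lam u^(2p-2), so that |g_lam(u)| = |u| |sqrt(T z) - 1|.  The functional equation
    gives |z| |T z|^p = |T z - 1|, and this yields a Hoelder bound |sqrt(T z) - 1| <= K |z|^th on the
    whole slit plane, for any 0 <= th <= 1: near 0 the modulus |T| starts at 1 and cannot cross the
    gap [3/2, 2], so |sqrt T - 1| <= |T - 1| <= 2^p |z|; away from 0 the equation bounds |T|, and
    |sqrt T - 1| <= sqrt(|T| + 1).  For th = 1/(4p^2) the integrand is then at most
    K |lam|^th |u|^(-1-delta) with delta > 0 on |u| >= 1.  The hypothesis on psi keeps z off the cut
    on the double sector, the one on eta does so on the unit circle, and integrating over the arcs
    and the four radial segments of Gamma_R gives a bound independent of R. *)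

From Pilot Require Import Defs.
From Stdlib Require Import Reals ZArith Lra Lia ClassicalEpsilon.
From Coquelicot Require Coquelicot.
(* Stdlib's Reals also defines C0 and C1; let the complex constants win. *)
Import Defs.
Open Scope R_scope.

(** * Complex numbers in polar form *)

Lemma CC_eq (a b : CC) : Re a = Re b -> Im a = Im b -> a = b.
Proof. destruct a, b; simpl; intros; subst; reflexivity. Qed.

Lemma sqrt_le_of_le_sq (x s : R) : 0 <= s -> x <= s * s -> sqrt x <= s.
Proof.
  intros Hs Hx. rewrite <- (sqrt_square s Hs).
  destruct (Rle_or_lt 0 x).
  - apply sqrt_le_1_alt; lra.
  - rewrite sqrt_neg_0 by lra. apply sqrt_pos.
Qed.

Lemma Cnorm_nonneg z : 0 <= Cnorm z.
Proof. apply sqrt_pos. Qed.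

Lemma Cnorm_sq z : Cnorm z * Cnorm z = Re z * Re z + Im z * Im z.
Proof. unfold Cnorm. apply sqrt_sqrt. nra. Qed.

Lemma Cnorm_mul a b : Cnorm (Cmul a b) = Cnorm a * Cnorm b.
Proof. unfold Cnorm, Cmul; simpl. rewrite <- sqrt_mult by nra. f_equal. ring. Qed.

Lemma Cnorm_C0 : Cnorm C0 = 0.
Proof. unfold Cnorm; simpl. replace (0 * 0 + 0 * 0) with 0 by ring. apply sqrt_0. Qed.

Lemma Cnorm_C1 : Cnorm C1 = 1.
Proof. unfold Cnorm; simpl. replace (1 * 1 + 0 * 0) with 1 by ring. apply sqrt_1. Qed.

Lemma Cnorm_pow z n : Cnorm (Cpow z n) = Cnorm z ^ n.
Proof. induction n; simpl; [apply Cnorm_C1 | rewrite Cnorm_mul, IHn; reflexivity]. Qed.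

Lemma Cnorm_opp a : Cnorm (Copp a) = Cnorm a.
Proof. unfold Cnorm, Copp; simpl. f_equal; ring. Qed.

Lemma Cnorm_eq0 z : Cnorm z = 0 -> z = C0.
Proof. intro H. pose proof (Cnorm_sq z) as E. rewrite H in E. apply CC_eq; simpl; nra. Qed.

Lemma Rabs_Re_le_Cnorm z : Rabs (Re z) <= Cnorm z.
Proof. unfold Cnorm. rewrite <- sqrt_Rsqr_abs. apply sqrt_le_1_alt. unfold Rsqr; nra. Qed.

Lemma Rabs_Im_le_Cnorm z : Rabs (Im z) <= Cnorm z.
Proof. unfold Cnorm. rewrite <- sqrt_Rsqr_abs. apply sqrt_le_1_alt. unfold Rsqr; nra. Qed.

Lemma Cnorm_add a b : Cnorm (Cadd a b) <= Cnorm a + Cnorm b.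
Proof.
  pose proof (Cnorm_sq a) as Ha; pose proof (Cnorm_sq b) as Hb.
  pose proof (Cnorm_nonneg a); pose proof (Cnorm_nonneg b).
  apply sqrt_le_of_le_sq; [lra|]. unfold Cadd; simpl.
  (* Cauchy-Schwarz: (a.b)^2 <= |a|^2 |b|^2 because of Lagrange's identity *)
  assert (CS : Re a * Re b + Im a * Im b <= Cnorm a * Cnorm b).
  { destruct (Rle_or_lt (Re a * Re b + Im a * Im b) 0); [nra|].
    assert ((Re a * Re b + Im a * Im b) ^ 2 <= (Cnorm a * Cnorm b) ^ 2).
    { replace ((Cnorm a * Cnorm b) ^ 2) with ((Cnorm a * Cnorm a) * (Cnorm b * Cnorm b)) by ring.
      rewrite Ha, Hb. pose proof (pow2_ge_0 (Re a * Im b - Im a * Re b)). nra. }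
    assert (0 <= Cnorm a * Cnorm b) by nra.
    destruct (Rle_or_lt (Re a * Re b + Im a * Im b) (Cnorm a * Cnorm b)); [assumption | nra]. }
  nra.
Qed.

Lemma Cnorm_sub a b : Cnorm (Csub a b) <= Cnorm a + Cnorm b.
Proof. unfold Csub. rewrite <- (Cnorm_opp b). apply Cnorm_add. Qed.

Lemma Cnorm_sub_ge a b : Cnorm a - Cnorm b <= Cnorm (Csub a b).
Proof.
  assert (E : a = Cadd (Csub a b) b) by (apply CC_eq; unfold Csub, Cadd, Copp; simpl; ring).
  pose proof (Cnorm_add (Csub a b) b) as H. rewrite <- E in H. lra.
Qed.

Lemma Cnorm_sub_C1_bounds w : Cnorm w - 1 <= Cnorm (Csub w C1) <= Cnorm w + 1.
Proof. pose proof (Cnorm_sub_ge w C1); pose proof (Cnorm_sub w C1). rewrite Cnorm_C1 in *. lra. Qed.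

Lemma Cnorm_le_Rabs_Re_Im z : Cnorm z <= Rabs (Re z) + Rabs (Im z).
Proof.
  pose proof (Rabs_pos (Re z)); pose proof (Rabs_pos (Im z)).
  apply sqrt_le_of_le_sq; [lra|].
  pose proof (pow2_abs (Re z)); pose proof (pow2_abs (Im z)). nra.
Qed.

Lemma Cdiv_mul a h : h <> C0 -> Cmul (Cdiv a h) h = a.
Proof.
  intro Hh. assert (Hd : Re h * Re h + Im h * Im h <> 0).
  { intro E. apply Hh. apply CC_eq; simpl; nra. }
  destruct a as [x y], h as [u v]; simpl in *.
  apply CC_eq; unfold Cdiv, Cmul, Cinv; simpl; field; auto.
Qed.

Lemma Cnorm_polar r t : Cnorm (polar r t) = Rabs r.
Proof.
  unfold Cnorm, polar; simpl. rewrite <- sqrt_Rsqr_abs. f_equal.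
  pose proof (sin2_cos2 t). unfold Rsqr in *. nra.
Qed.

Lemma polar_mul a s b t : Cmul (polar a s) (polar b t) = polar (a * b) (s + t).
Proof. apply CC_eq; unfold Cmul, polar; simpl; rewrite ?cos_plus, ?sin_plus; ring. Qed.

Lemma Cpow_polar r t n : Cpow (polar r t) n = polar (r ^ n) (INR n * t).
Proof.
  induction n.
  - apply CC_eq; simpl; rewrite ?Rmult_0_l, ?cos_0, ?sin_0; ring.
  - simpl Cpow. rewrite IHn, polar_mul, S_INR. f_equal; simpl; ring.
Qed.

Lemma Copp_polar r t : Copp (polar r t) = polar r (t - PI).
Proof.
  apply CC_eq; unfold Copp, polar; simpl; rewrite ?cos_minus, ?sin_minus, ?cos_PI, ?sin_PI; ring.
Qed.

Lemma cos_Zperiod x q : cos (x + 2 * IZR q * PI) = cos x.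
Proof.
  destruct (Z_le_gt_dec 0 q).
  - rewrite <- (Z2Nat.id q), <- INR_IZR_INZ by lia. apply cos_period.
  - assert (E : IZR q = - INR (Z.to_nat (- q))) by (rewrite INR_IZR_INZ, Z2Nat.id, opp_IZR by lia; ring).
    rewrite E, <- (cos_period (x + 2 * - INR (Z.to_nat (- q)) * PI) (Z.to_nat (- q))). f_equal. ring.
Qed.

Lemma sin_Zperiod x q : sin (x + 2 * IZR q * PI) = sin x.
Proof.
  destruct (Z_le_gt_dec 0 q).
  - rewrite <- (Z2Nat.id q), <- INR_IZR_INZ by lia. apply sin_period.
  - assert (E : IZR q = - INR (Z.to_nat (- q))) by (rewrite INR_IZR_INZ, Z2Nat.id, opp_IZR by lia; ring).
    rewrite E, <- (sin_period (x + 2 * - INR (Z.to_nat (- q)) * PI) (Z.to_nat (- q))). f_equal. ring.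
Qed.

Lemma polar_Zperiod r t q : polar r (t + 2 * IZR q * PI) = polar r t.
Proof. unfold polar. rewrite cos_Zperiod, sin_Zperiod. reflexivity. Qed.

Lemma sqrt_1_plus_sq_div x y : x <> 0 -> sqrt (1 + (y / x)²) = sqrt (x * x + y * y) / Rabs x.
Proof.
  intro Hx. assert (0 < Rabs x) by (apply Rabs_pos_lt; auto).
  apply (Rmult_eq_reg_r (Rabs x)); [|lra].
  unfold Rdiv at 2. rewrite Rmult_assoc, Rinv_l, Rmult_1_r by lra.
  rewrite <- (sqrt_Rsqr (Rabs x)) at 1 by lra.
  rewrite <- sqrt_mult by (unfold Rsqr; nra).
  f_equal. unfold Rsqr. rewrite <- Rabs_mult, Rabs_right by nra. field. auto.
Qed.

Lemma polar_Cnorm_Carg z : z <> C0 -> z = polar (Cnorm z) (Carg z).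
Proof.
  intro Hz. destruct z as [x y]. unfold Carg, polar, Cnorm; simpl.
  assert (HN : 0 < sqrt (x * x + y * y)).
  { apply sqrt_lt_R0. destruct (Req_dec x 0); destruct (Req_dec y 0); subst; [|nra..].
    exfalso; apply Hz; reflexivity. }
  destruct (Rlt_dec 0 x).
  - rewrite cos_atan, sin_atan, sqrt_1_plus_sq_div, Rabs_right by lra.
    apply CC_eq; simpl; field; lra.
  - destruct (Rlt_dec x 0).
    + assert (Rabs x = - x) by (apply Rabs_left; lra).
      destruct (Rle_dec 0 y).
      * rewrite neg_cos, neg_sin, cos_atan, sin_atan, sqrt_1_plus_sq_div by lra.
        apply CC_eq; simpl; rewrite H; field; lra.
      * rewrite cos_minus, sin_minus, cos_PI, sin_PI, cos_atan, sin_atan, sqrt_1_plus_sq_div by lra.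
        apply CC_eq; simpl; rewrite H; field; lra.
    + assert (x = 0) by lra. subst.
      destruct (Rlt_dec 0 y).
      * rewrite cos_PI2, sin_PI2. replace (0 * 0 + y * y) with (y * y) by ring.
        rewrite sqrt_square by lra. apply CC_eq; simpl; ring.
      * destruct (Rlt_dec y 0).
        -- rewrite cos_neg, sin_neg, cos_PI2, sin_PI2. replace (0 * 0 + y * y) with ((- y) * (- y)) by ring.
           rewrite sqrt_square by lra. apply CC_eq; simpl; ring.
        -- exfalso; apply Hz. assert (y = 0) by lra. subst; reflexivity.
Qed.

Lemma Carg_polar r t : 0 < r -> - (PI / 2) < t < PI / 2 -> Carg (polar r t) = t.
Proof.
  intros Hr Ht. pose proof (cos_gt_0 t ltac:(lra) ltac:(lra)).
  unfold Carg, polar; simpl. destruct (Rlt_dec 0 (r * cos t)); [|nra].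
  replace (r * sin t / (r * cos t)) with (tan t) by (unfold tan; field; lra).
  apply atan_tan; lra.
Qed.

Lemma polar_positive_real_angle m t : 0 < m -> Im (polar m t) = 0 -> 0 < Re (polar m t) ->
  exists q : Z, t = 2 * IZR q * PI.
Proof.
  unfold polar; simpl. intros Hm Hs Hc.
  destruct (sin_eq_0_0 t) as [k Hk]; [nra|].
  destruct (Zeven_odd_dec k) as [He|Ho].
  - destruct (Zeven_ex k He) as [q Hq]. exists q. rewrite Hk, Hq, mult_IZR. ring.
  - destruct (Zodd_ex k Ho) as [q Hq]. exfalso.
    rewrite Hk, Hq, plus_IZR, mult_IZR in Hc.
    replace ((2 * IZR q + 1) * PI) with (PI + 2 * IZR q * PI) in Hc by ring.
    rewrite cos_Zperiod, cos_PI in Hc. lra.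
Qed.

(** * Continuity along curves *)

Definition Ccontinuous_at (f : CC -> CC) (z : CC) : Prop :=
  forall e, 0 < e -> exists d, 0 < d /\
    forall w, Cnorm (Csub w z) < d -> Cnorm (Csub (f w) (f z)) < e.

Lemma holomorphic_at_continuous f z : holomorphic_at f z -> Ccontinuous_at f z.
Proof.
  intros [l Hl] e He. destruct (Hl 1 Rlt_0_1) as [d1 [Hd1 H1]].
  pose proof (Cnorm_nonneg l).
  exists (Rmin d1 (e / (Cnorm l + 2))). split.
  { apply Rmin_pos; [exact Hd1 | apply Rdiv_lt_0_compat; lra]. }
  intros w Hw. set (h := Csub w z) in *.
  assert (Hwz : w = Cadd z h) by (apply CC_eq; unfold h, Csub, Cadd, Copp; simpl; ring).
  destruct (Req_dec (Cnorm h) 0) as [E|E].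
  - apply Cnorm_eq0 in E. rewrite Hwz, E.
    replace (Cadd z C0) with z by (apply CC_eq; unfold Cadd; simpl; ring).
    replace (Csub (f z) (f z)) with C0 by (apply CC_eq; unfold Csub, Cadd, Copp; simpl; ring).
    rewrite Cnorm_C0; exact He.
  - assert (Hh0 : h <> C0) by (intro F; apply E; rewrite F; apply Cnorm_C0).
    pose proof (Rmin_l d1 (e / (Cnorm l + 2))); pose proof (Rmin_r d1 (e / (Cnorm l + 2))).
    specialize (H1 h Hh0 ltac:(lra)). rewrite <- Hwz in H1.
    set (q := Cdiv (Csub (f w) (f z)) h) in *.
    assert (Eq : Csub (f w) (f z) = Cmul q h) by (unfold q; rewrite Cdiv_mul; auto).
    pose proof (Cnorm_sub_ge q l). pose proof (Cnorm_nonneg h). pose proof (Cnorm_nonneg q).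
    rewrite Eq, Cnorm_mul.
    apply Rle_lt_trans with ((Cnorm l + 2) * Cnorm h); [nra|].
    apply (Rmult_lt_reg_r (/ (Cnorm l + 2))); [apply Rinv_0_lt_compat; lra|].
    replace ((Cnorm l + 2) * Cnorm h * / (Cnorm l + 2)) with (Cnorm h) by (field; lra).
    unfold Rdiv in *. lra.
Qed.

Definition curve_continuous_at (phi : R -> CC) (x : R) : Prop :=
  continuity_pt (fun t => Re (phi t)) x /\ continuity_pt (fun t => Im (phi t)) x.

Lemma curve_continuous_at_dist phi x : curve_continuous_at phi x ->
  forall e, 0 < e -> exists d, 0 < d /\
    forall y, Rabs (y - x) < d -> Cnorm (Csub (phi y) (phi x)) < e.
Proof.
  intros [H1 H2] e He.
  destruct (H1 (e / 2) ltac:(lra)) as [a1 [Ha1 A1]].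
  destruct (H2 (e / 2) ltac:(lra)) as [a2 [Ha2 A2]].
  exists (Rmin a1 a2). split; [apply Rmin_pos; assumption|].
  intros y Hy. pose proof (Rmin_l a1 a2); pose proof (Rmin_r a1 a2).
  destruct (Req_dec y x) as [->|Hne].
  - replace (Csub (phi x) (phi x)) with C0 by (apply CC_eq; unfold Csub, Cadd, Copp; simpl; ring).
    rewrite Cnorm_C0; lra.
  - specialize (A1 y); specialize (A2 y). simpl in A1, A2. unfold R_dist, D_x, no_cond in A1, A2.
    assert (Hd1 : Rabs (Re (phi y) - Re (phi x)) < e / 2) by (apply A1; repeat split; auto; lra).
    assert (Hd2 : Rabs (Im (phi y) - Im (phi x)) < e / 2) by (apply A2; repeat split; auto; lra).
    eapply Rle_lt_trans; [apply Cnorm_le_Rabs_Re_Im|]. unfold Csub, Cadd, Copp; simpl.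
    unfold Rminus in Hd1, Hd2. lra.
Qed.

Lemma curve_continuous_at_comp f phi x : curve_continuous_at phi x -> Ccontinuous_at f (phi x) ->
  curve_continuous_at (fun t => f (phi t)) x.
Proof.
  intros Hphi Hf.
  split; intros e He; destruct (Hf e He) as [d [Hd Hw]];
    destruct (curve_continuous_at_dist phi x Hphi d Hd) as [a [Ha Hy]];
    exists a; split; try exact Ha; intros y [_ Hyx]; simpl in *; unfold R_dist in *;
    specialize (Hw (phi y) (Hy y Hyx)); eapply Rle_lt_trans; try exact Hw.
  - apply (Rabs_Re_le_Cnorm (Csub (f (phi y)) (f (phi x)))).
  - apply (Rabs_Im_le_Cnorm (Csub (f (phi y)) (f (phi x)))).
Qed.

Lemma continuity_pt_cst (c x : R) : continuity_pt (fun _ => c) x.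
Proof. apply continuity_pt_const. intros u v; reflexivity. Qed.

Lemma curve_continuous_at_const c x : curve_continuous_at (fun _ => c) x.
Proof. split; apply continuity_pt_cst. Qed.

Lemma curve_continuous_at_mul phi chi x : curve_continuous_at phi x -> curve_continuous_at chi x ->
  curve_continuous_at (fun t => Cmul (phi t) (chi t)) x.
Proof.
  intros [A B] [C D]. unfold Cmul. split; simpl.
  - apply continuity_pt_minus; apply continuity_pt_mult; assumption.
  - apply continuity_pt_plus; apply continuity_pt_mult; assumption.
Qed.

Lemma curve_continuous_at_pow phi x n : curve_continuous_at phi x ->
  curve_continuous_at (fun t => Cpow (phi t) n) x.
Proof.
  intro H. induction n; simpl.
  - apply curve_continuous_at_const.
  - apply curve_continuous_at_mul; assumption.
Qed.

Lemma curve_continuous_at_opp phi x : curve_continuous_at phi x ->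
  curve_continuous_at (fun t => Copp (phi t)) x.
Proof. intros [A B]. unfold Copp; split; simpl; apply continuity_pt_opp; assumption. Qed.

Lemma curve_continuous_at_polar_r t x : curve_continuous_at (fun r => polar r t) x.
Proof.
  unfold polar; split; simpl; apply continuity_pt_mult;
    [apply derivable_continuous_pt, derivable_pt_id | apply continuity_pt_cst
    |apply derivable_continuous_pt, derivable_pt_id | apply continuity_pt_cst].
Qed.

Lemma curve_continuous_at_polar_t r x : curve_continuous_at (fun t => polar r t) x.
Proof.
  unfold polar; split; simpl; apply continuity_pt_mult;
    [apply continuity_pt_cst | apply derivable_continuous_pt, derivable_pt_cos
    |apply continuity_pt_cst | apply derivable_continuous_pt, derivable_pt_sin].
Qed.

Lemma continuity_pt_Cnorm phi x : curve_continuous_at phi x ->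
  continuity_pt (fun t => Cnorm (phi t)) x.
Proof.
  intros [A B]. unfold Cnorm.
  apply (continuity_pt_comp (fun t => Re (phi t) * Re (phi t) + Im (phi t) * Im (phi t)) sqrt x).
  - apply continuity_pt_plus; apply continuity_pt_mult; assumption.
  - apply continuity_pt_sqrt. nra.
Qed.

Lemma continuity_pt_sqrt_comp h x : continuity_pt h x -> 0 <= h x ->
  continuity_pt (fun t => sqrt (h t)) x.
Proof. intros H1 H2. apply (continuity_pt_comp h sqrt x H1), continuity_pt_sqrt, H2. Qed.

Lemma continuity_pt_Rpower_comp h c x : continuity_pt h x -> 0 < h x ->
  continuity_pt (fun t => Rpower (h t) c) x.
Proof.
  intros H1 H2. apply (continuity_pt_comp h (fun y => Rpower y c) x H1).
  apply derivable_continuous_pt. exists (c * Rpower (h x) (c - 1)). apply derivable_pt_lim_power, H2.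
Qed.

Definition continuous_along (F : CC -> R) (u : CC) : Prop :=
  forall phi x, curve_continuous_at phi x -> phi x = u -> continuity_pt (fun t => F (phi t)) x.

(** * The cut rays and the double sector *)

Lemma INR_ge2 p : (2 <= p)%nat -> 2 <= INR p.
Proof. intro. replace 2 with (INR 2) by (simpl; ring). apply le_INR; assumption. Qed.

Lemma INR_2p_minus_2 p : (2 <= p)%nat -> INR (2 * p - 2) = 2 * INR p - 2.
Proof. intro. rewrite minus_INR, mult_INR by lia. simpl. ring. Qed.

Lemma Rabs_le_inv x c : Rabs x <= c -> - c <= x <= c.
Proof. intro H. pose proof (Rle_abs x); pose proof (Rle_abs (- x)). rewrite Rabs_Ropp in *. lra. Qed.

Lemma in_double_sector_polar_0 psi r t : 0 < r -> psi < PI / 2 -> Rabs t <= psi ->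
  in_double_sector psi (polar r t).
Proof.
  intros Hr Hpsi Ht. apply Rabs_le_inv in Ht. left. rewrite Carg_polar; [apply Rabs_le|..]; lra.
Qed.

Lemma in_double_sector_polar_PI psi r t : 0 < r -> psi < PI / 2 -> Rabs (t - PI) <= psi ->
  in_double_sector psi (polar r t).
Proof.
  intros Hr Hpsi Ht. apply Rabs_le_inv in Ht. right.
  rewrite Copp_polar, Carg_polar; [apply Rabs_le|..]; lra.
Qed.

Lemma in_double_sector_polar_mPI psi r t : 0 < r -> psi < PI / 2 -> Rabs (t + PI) <= psi ->
  in_double_sector psi (polar r t).
Proof.
  intros Hr Hpsi Ht. rewrite <- (polar_Zperiod r t 1). apply in_double_sector_polar_PI; auto.
  replace (t + 2 * IZR 1 * PI - PI) with (t + PI) by (simpl; ring). exact Ht.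
Qed.

Definition z_lam (p : nat) (lam u : CC) : CC := Copp (Cmul lam (Cpow u (2 * p - 2))).

Lemma Cnorm_z_lam p lam u : Cnorm (z_lam p lam u) = Cnorm lam * Cnorm u ^ (2 * p - 2).
Proof. unfold z_lam. rewrite Cnorm_opp, Cnorm_mul, Cnorm_pow. reflexivity. Qed.

Lemma z_lam_polar p lam r t : lam <> C0 ->
  z_lam p lam (polar r t) = polar (Cnorm lam * r ^ (2 * p - 2)) (Carg lam + INR (2 * p - 2) * t - PI).
Proof.
  intro Hl. unfold z_lam. rewrite (polar_Cnorm_Carg lam Hl) at 1.
  rewrite Cpow_polar, polar_mul, Copp_polar. reflexivity.
Qed.

Lemma FC_rho_pos p : (2 <= p)%nat -> 0 < FC_rho p.
Proof. intro Hp. pose proof (INR_ge2 p Hp). unfold FC_rho. apply Rdiv_lt_0_compat; apply pow_lt; lra. Qed.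

Lemma in_slit_plane_of_Cnorm_lt p z : Cnorm z < FC_rho p -> in_slit_plane p z.
Proof. intros Hz [_ H]. pose proof (Rabs_Re_le_Cnorm z). pose proof (Rle_abs (Re z)). lra. Qed.

Lemma cut_ray_angle_mod p lam q : (2 <= p)%nat ->
  exists k j : Z, (- Z.of_nat p + 2 <= k <= Z.of_nat p - 1)%Z /\
    cut_ray_angle p lam k = cut_ray_angle p lam q + 2 * IZR j * PI.
Proof.
  intro Hp. pose proof (INR_ge2 p Hp).
  set (M := (2 * Z.of_nat p - 2)%Z).
  assert (HM : (0 < M)%Z) by (unfold M; lia).
  set (j := ((q + Z.of_nat p - 2) / M)%Z).
  exists (q - M * j)%Z, (- j)%Z. split.
  - pose proof (Z.div_mod (q + Z.of_nat p - 2) M ltac:(lia)) as Hdiv.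
    pose proof (Z.mod_pos_bound (q + Z.of_nat p - 2) M HM) as Hmod.
    fold j in Hdiv. unfold M in *. lia.
  - unfold cut_ray_angle, M.
    rewrite opp_IZR, minus_IZR, mult_IZR, minus_IZR, mult_IZR, <- INR_IZR_INZ. field. lra.
Qed.

Definition cut_rays_avoid (p : nat) (eps psi : R) : Prop :=
  forall (lam : CC) (k : Z), lam <> C0 -> Rabs (Carg lam) <= PI - eps ->
    (- (Z.of_nat p) + 2 <= k <= Z.of_nat p - 1)%Z ->
    forall r, 0 < r -> ~ in_double_sector psi (polar r (cut_ray_angle p lam k)).

(* [z_lam] hits the cut [rho, +oo) of [T] exactly when [u] lies on one of the cut rays. *)
Lemma in_slit_plane_z_lam_sector p eps psi lam r t : (2 <= p)%nat -> cut_rays_avoid p eps psi ->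
  lam <> C0 -> Rabs (Carg lam) <= PI - eps -> 0 < r -> in_double_sector psi (polar r t) ->
  in_slit_plane p (z_lam p lam (polar r t)).
Proof.
  intros Hp Hcut Hl Ha Hr Hds [Him Hre].
  pose proof (FC_rho_pos p Hp). pose proof (INR_ge2 p Hp).
  assert (Hlam : 0 < Cnorm lam).
  { destruct (Cnorm_nonneg lam) as [|E]; [assumption|]. exfalso; apply Hl, Cnorm_eq0; auto. }
  rewrite z_lam_polar in Him, Hre by exact Hl.
  assert (Hm : 0 < Cnorm lam * r ^ (2 * p - 2)) by (apply Rmult_lt_0_compat; [|apply pow_lt]; lra).
  destruct (polar_positive_real_angle _ _ Hm Him ltac:(lra)) as [q Hq].
  destruct (cut_ray_angle_mod p lam q Hp) as [k [j [Hk Hkj]]].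
  apply (Hcut lam k Hl Ha Hk r Hr).
  replace (cut_ray_angle p lam k) with (t + 2 * IZR j * PI); [rewrite polar_Zperiod; exact Hds|].
  rewrite Hkj. f_equal. rewrite INR_2p_minus_2 in Hq by exact Hp.
  unfold cut_ray_angle. apply (Rmult_eq_reg_r (2 * INR p - 2)); [|lra].
  replace (t * (2 * INR p - 2)) with (PI - Carg lam + 2 * IZR q * PI) by nra.
  field. lra.
Qed.

(** * Estimates for the Fuss-Catalan function *)

Lemma Cnorm_FussCatalan p T z : is_FussCatalan p T -> in_slit_plane p z ->
  Cnorm z * Cnorm (T z) ^ p = Cnorm (Csub (T z) C1).
Proof.
  intros [_ [_ HT]] Hz. rewrite <- Cnorm_pow, <- Cnorm_mul. f_equal.
  pose proof (HT z Hz) as E. pose proof (f_equal Re E) as Ere. pose proof (f_equal Im E) as Eim.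
  simpl in Ere, Eim. apply CC_eq; simpl; lra.
Qed.

Lemma Rle_pow_self x n : 1 <= x -> (1 <= n)%nat -> x <= x ^ n.
Proof.
  intros Hx Hn. replace n with (S (n - 1)) by lia. simpl.
  pose proof (pow_R1_Rle x (n - 1) Hx). nra.
Qed.

Lemma FC_norm_le_far p (zn N delta : R) : (2 <= p)%nat -> 0 < delta -> delta <= zn -> 0 <= N ->
  zn * N ^ p <= N + 1 -> N <= Rmax 1 (2 / delta).
Proof.
  intros Hp Hd Hz HN HD. destruct (Rle_or_lt N 1); [eapply Rle_trans; [|apply Rmax_l]; assumption|].
  eapply Rle_trans; [|apply Rmax_r].
  assert (N * N <= N ^ p).
  { replace p with (S (p - 1)) by lia. simpl. pose proof (Rle_pow_self N (p - 1) ltac:(lra) ltac:(lia)). nra. }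
  assert (delta * N ^ p <= zn * N ^ p) by (apply Rmult_le_compat_r; [apply pow_le|]; lra).
  assert (delta * N <= 2) by nra.
  apply (Rmult_le_reg_l delta); [exact Hd|]. replace (delta * (2 / delta)) with 2 by (field; lra). lra.
Qed.

Definition delta0 (p : nat) : R := / 2 ^ (p + 2).

Lemma FC_norm_gap p (zn N : R) : 0 <= zn -> zn < delta0 p -> N - 1 <= zn * N ^ p ->
  ~ (3 / 2 <= N <= 2).
Proof.
  intros Hz0 Hz HD HN.
  assert (N ^ p <= 2 ^ p) by (apply pow_incr; lra).
  assert (H2 : 0 < 2 ^ p) by (apply pow_lt; lra).
  assert (zn * 2 ^ p < 1 / 4).
  { unfold delta0 in Hz. rewrite pow_add in Hz. simpl in Hz.
    apply (Rmult_lt_compat_r (2 ^ p)) in Hz; [|exact H2].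
    replace (/ (2 ^ p * (2 * (2 * 1))) * 2 ^ p) with (1 / 4) in Hz by (field; lra). lra. }
  assert (zn * N ^ p <= zn * 2 ^ p) by (apply Rmult_le_compat_l; assumption). lra.
Qed.

Definition delta1 (p : nat) : R := Rmin (delta0 p) (FC_rho p).

Lemma delta1_pos p : (2 <= p)%nat -> 0 < delta1 p.
Proof.
  intro Hp. unfold delta1, delta0. apply Rmin_pos; [apply Rinv_0_lt_compat, pow_lt; lra | apply FC_rho_pos, Hp].
Qed.

(* Along the segment [0, z] the continuous function |T| starts at 1 and cannot cross the gap
   [3/2, 2], so it stays below 3/2. *)
Lemma Cnorm_FussCatalan_lt_small p T z : (2 <= p)%nat -> is_FussCatalan p T -> Cnorm z < delta1 p ->
  Cnorm (T z) < 3 / 2.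
Proof.
  intros Hp HT Hz.
  pose proof (Rmin_l (delta0 p) (FC_rho p)); pose proof (Rmin_r (delta0 p) (FC_rho p)). unfold delta1 in Hz.
  set (seg := fun t => mkCC (t * Re z) (t * Im z)).
  assert (Hseg : forall t, 0 <= t <= 1 -> Cnorm (seg t) <= Cnorm z).
  { intros t Ht. unfold Cnorm, seg; simpl. apply sqrt_le_1_alt.
    assert (t * t <= 1) by nra. pose proof (Rle_0_sqr (Re z)); pose proof (Rle_0_sqr (Im z)).
    unfold Rsqr in *. nra. }
  assert (Hslit : forall t, 0 <= t <= 1 -> in_slit_plane p (seg t))
    by (intros t Ht; apply in_slit_plane_of_Cnorm_lt; pose proof (Hseg t Ht); lra).
  assert (Hgap : forall t, 0 <= t <= 1 -> ~ (3 / 2 <= Cnorm (T (seg t)) <= 2)).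
  { intros t Ht. pose proof (Cnorm_FussCatalan p T _ HT (Hslit t Ht)).
    pose proof (Cnorm_sub_C1_bounds (T (seg t))). pose proof (Hseg t Ht).
    apply (FC_norm_gap p (Cnorm (seg t))); [apply Cnorm_nonneg | lra | lra]. }
  assert (E1 : seg 1 = z) by (apply CC_eq; unfold seg; simpl; ring).
  assert (E0 : seg 0 = C0) by (apply CC_eq; unfold seg; simpl; ring).
  destruct (Rlt_or_le (Cnorm (T z)) (3 / 2)) as [|Hge]; [assumption|]. exfalso.
  destruct (Rle_or_lt (Cnorm (T z)) 2) as [H2|H2]; [apply (Hgap 1); [|rewrite E1]; lra|].
  assert (Hc : forall a, 0 <= a <= 1 -> continuity_pt (fun t => Cnorm (T (seg t)) - 7 / 4) a).
  { intros a Ha. apply continuity_pt_minus; [|apply continuity_pt_cst].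
    apply continuity_pt_Cnorm, curve_continuous_at_comp.
    - unfold seg; split; simpl; apply continuity_pt_mult;
        solve [apply derivable_continuous_pt, derivable_pt_id | apply continuity_pt_cst].
    - apply holomorphic_at_continuous. destruct HT as [_ [HH _]]. apply HH, Hslit, Ha. }
  destruct (Ranalysis5.IVT_interv _ 0 1 Hc Rlt_0_1) as [t [Ht Eq]].
  - rewrite E0. destruct HT as [HT0 _]. rewrite HT0, Cnorm_C1. lra.
  - rewrite E1. lra.
  - apply (Hgap t Ht). lra.
Qed.

Lemma Cnorm_FussCatalan_le_far p T z : (2 <= p)%nat -> is_FussCatalan p T -> in_slit_plane p z ->
  delta1 p <= Cnorm z -> Cnorm (T z) <= Rmax 1 (2 / delta1 p).
Proof.
  intros Hp HT Hs Hz. pose proof (Cnorm_FussCatalan p T z HT Hs). pose proof (Cnorm_sub_C1_bounds (T z)).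
  apply (FC_norm_le_far p (Cnorm z)); [exact Hp | apply delta1_pos, Hp | exact Hz | apply Cnorm_nonneg | lra].
Qed.

Definition sqrt_dist1 (w : CC) : R := Cnorm (Csub (Csqrt w) C1).

Lemma sqrt_dist1_sq w :
  sqrt_dist1 w * sqrt_dist1 w = Cnorm w + 1 - 2 * sqrt ((Cnorm w + Re w) / 2).
Proof.
  unfold sqrt_dist1. rewrite Cnorm_sq. pose proof (Rabs_Re_le_Cnorm w).
  pose proof (Rle_abs (Re w)). pose proof (Rle_abs (- Re w)). rewrite Rabs_Ropp in *.
  unfold Csqrt, Csub, Cadd, Copp, C1; simpl.
  assert (sqrt ((Cnorm w + Re w) / 2) * sqrt ((Cnorm w + Re w) / 2) = (Cnorm w + Re w) / 2)
    by (apply sqrt_sqrt; lra).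
  assert (sqrt ((Cnorm w - Re w) / 2) * sqrt ((Cnorm w - Re w) / 2) = (Cnorm w - Re w) / 2)
    by (apply sqrt_sqrt; lra).
  destruct (Rle_dec 0 (Im w)); nra.
Qed.

Lemma sqrt_dist1_eq w : sqrt_dist1 w = sqrt (Cnorm w + 1 - 2 * sqrt ((Cnorm w + Re w) / 2)).
Proof. rewrite <- sqrt_dist1_sq, sqrt_square; [reflexivity | apply Cnorm_nonneg]. Qed.

Lemma sqrt_dist1_le w : sqrt_dist1 w <= Cnorm (Csub w C1).
Proof.
  rewrite sqrt_dist1_eq. apply sqrt_le_of_le_sq; [apply Cnorm_nonneg|].
  rewrite Cnorm_sq. unfold Csub, Cadd, Copp, C1; simpl.
  pose proof (Cnorm_sq w). pose proof (Cnorm_nonneg w). pose proof (Rabs_Re_le_Cnorm w).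
  pose proof (Rle_abs (Re w)). pose proof (Rle_abs (- Re w)). rewrite Rabs_Ropp in *.
  set (a := sqrt ((Cnorm w + Re w) / 2)).
  assert (a * a = (Cnorm w + Re w) / 2) by (apply sqrt_sqrt; lra).
  assert (0 <= a) by apply sqrt_pos.
  assert (2 * a <= Cnorm w + 1) by (pose proof (pow2_ge_0 (a - 1)); nra).
  nra.
Qed.

Lemma sqrt_dist1_le_sqrt w : sqrt_dist1 w <= sqrt (Cnorm w + 1).
Proof. rewrite sqrt_dist1_eq. apply sqrt_le_1_alt. pose proof (sqrt_pos ((Cnorm w + Re w) / 2)). lra. Qed.

(* Csqrt jumps across the negative axis, but |sqrt w - 1| does not (see sqrt_dist1_eq). *)
Lemma continuity_pt_sqrt_dist1 W x : curve_continuous_at W x ->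
  continuity_pt (fun t => sqrt_dist1 (W t)) x.
Proof.
  intro HW. pose proof (continuity_pt_Cnorm W x HW) as HN. destruct HW as [HRe _].
  apply (continuity_pt_locally_ext
    (fun t => sqrt (Cnorm (W t) + 1 - 2 * sqrt ((Cnorm (W t) + Re (W t)) / 2))) _ 1 x Rlt_0_1).
  { intros y _. symmetry. apply sqrt_dist1_eq. }
  pose proof (Rabs_Re_le_Cnorm (W x)). pose proof (Rle_abs (- Re (W x))). rewrite Rabs_Ropp in *.
  apply continuity_pt_sqrt_comp.
  - apply continuity_pt_minus; [apply continuity_pt_plus; [exact HN | apply continuity_pt_cst]|].
    apply continuity_pt_mult; [apply continuity_pt_cst|].
    apply continuity_pt_sqrt_comp; [|lra].
    apply continuity_pt_mult; [apply continuity_pt_plus; assumption | apply continuity_pt_cst].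
  - rewrite <- sqrt_dist1_sq. pose proof (Cnorm_nonneg (Csub (Csqrt (W x)) C1)). unfold sqrt_dist1. nra.
Qed.

Lemma Rpower_pos x y : 0 < Rpower x y.
Proof. apply exp_pos. Qed.

Lemma Rpower_1_l y : Rpower 1 y = 1.
Proof. unfold Rpower. rewrite ln_1, Rmult_0_r. apply exp_0. Qed.

Lemma Rpower_interp_le x d th : 0 < x <= d -> 0 <= th <= 1 ->
  x <= Rpower d (1 - th) * Rpower x th.
Proof.
  intros Hx Hth.
  replace x with (Rpower x (1 - th) * Rpower x th) at 1
    by (rewrite <- Rpower_plus; replace (1 - th + th) with 1 by ring; apply Rpower_1; lra).
  apply Rmult_le_compat_r; [left; apply Rpower_pos | apply Rle_Rpower_l; lra].
Qed.

Lemma Rpower_ratio_ge1 x d th : 0 < d <= x -> 0 <= th -> 1 <= Rpower d (- th) * Rpower x th.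
Proof.
  intros Hx Hth. rewrite Rpower_Ropp. pose proof (Rpower_pos d th).
  apply (Rmult_le_reg_l (Rpower d th)); [assumption|].
  rewrite <- Rmult_assoc, Rinv_r, Rmult_1_l, Rmult_1_r by lra. apply Rle_Rpower_l; lra.
Qed.

Definition holder_const (p : nat) (th : R) : R :=
  Rmax (2 ^ p * Rpower (delta1 p) (1 - th))
       (sqrt (Rmax 1 (2 / delta1 p) + 1) * Rpower (delta1 p) (- th)).

Lemma holder_const_nonneg p th : 0 <= holder_const p th.
Proof.
  eapply Rle_trans; [|apply Rmax_l].
  apply Rmult_le_pos; [apply pow_le; lra | left; apply Rpower_pos].
Qed.

Lemma sqrt_dist1_FussCatalan_le p T th z : (2 <= p)%nat -> is_FussCatalan p T -> 0 <= th <= 1 ->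
  in_slit_plane p z -> 0 < Cnorm z ->
  sqrt_dist1 (T z) <= holder_const p th * Rpower (Cnorm z) th.
Proof.
  intros Hp HT Hth Hs Hz. pose proof (delta1_pos p Hp). pose proof (Rpower_pos (Cnorm z) th).
  destruct (Rlt_or_le (Cnorm z) (delta1 p)) as [Hnear|Hfar].
  - pose proof (Cnorm_FussCatalan_lt_small p T z Hp HT Hnear).
    apply Rle_trans with (2 ^ p * Cnorm z).
    + eapply Rle_trans; [apply sqrt_dist1_le|]. rewrite <- (Cnorm_FussCatalan p T z HT Hs), Rmult_comm.
      apply Rmult_le_compat_r; [apply Cnorm_nonneg | apply pow_incr; split; [apply Cnorm_nonneg | lra]].
    + pose proof (Rpower_interp_le (Cnorm z) (delta1 p) th ltac:(lra) Hth).
      apply Rle_trans with (2 ^ p * Rpower (delta1 p) (1 - th) * Rpower (Cnorm z) th).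
      * rewrite Rmult_assoc. apply Rmult_le_compat_l; [apply pow_le; lra | assumption].
      * apply Rmult_le_compat_r; [lra | apply Rmax_l].
  - pose proof (Cnorm_FussCatalan_le_far p T z Hp HT Hs Hfar).
    pose proof (Rpower_ratio_ge1 (Cnorm z) (delta1 p) th ltac:(lra) ltac:(lra)).
    set (M := sqrt (Rmax 1 (2 / delta1 p) + 1)).
    assert (sqrt_dist1 (T z) <= M).
    { eapply Rle_trans; [apply sqrt_dist1_le_sqrt | apply sqrt_le_1_alt; lra]. }
    apply Rle_trans with (M * Rpower (delta1 p) (- th) * Rpower (Cnorm z) th).
    + rewrite Rmult_assoc. assert (0 <= M) by apply sqrt_pos. nra.
    + apply Rmult_le_compat_r; [lra | apply Rmax_r].
Qed.

Definition g_weighted (p : nat) (T : CC -> CC) (lam u : CC) : R :=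
  Cnorm (g_lam p T lam u) * Rpower (/ (1 + Cnorm u)) (2 + 1 / INR p).

Definition decay (p : nat) (th : R) : R := 1 + INR (2 * p - 2) * th - (2 + 1 / INR p).

Lemma Cnorm_g_lam p T lam u : Cnorm (g_lam p T lam u) = Cnorm u * sqrt_dist1 (T (z_lam p lam u)).
Proof.
  unfold g_lam, h_lam, f_lam, sqrt_dist1, z_lam. rewrite <- Cnorm_mul. f_equal.
  apply CC_eq; unfold Csub, Cadd, Copp, Cmul, C1; simpl; ring.
Qed.

Lemma Rpower_inv_1plus_le x c : 1 <= x -> 0 <= c -> Rpower (/ (1 + x)) c <= Rpower x (- c).
Proof.
  intros Hx Hc. unfold Rpower. rewrite ln_Rinv by lra.
  assert (ln x <= ln (1 + x)) by (left; apply ln_increasing; lra).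
  destruct (Req_dec (c * - ln (1 + x)) (- c * ln x)) as [E|]; [rewrite E; lra|].
  left. apply exp_increasing. nra.
Qed.

Lemma g_weighted_le p T lam u th : (2 <= p)%nat -> is_FussCatalan p T -> 0 <= th <= 1 ->
  0 < Cnorm lam -> 1 <= Cnorm u -> in_slit_plane p (z_lam p lam u) ->
  g_weighted p T lam u <= holder_const p th * Rpower (Cnorm lam) th * Rpower (Cnorm u) (decay p th).
Proof.
  intros Hp HT Hth Hl Hu Hs. pose proof (INR_ge2 p Hp).
  set (r := Cnorm u) in *. set (c := 2 + 1 / INR p).
  assert (Hz : 0 < Cnorm (z_lam p lam u)).
  { rewrite Cnorm_z_lam. fold r. apply Rmult_lt_0_compat; [|apply pow_lt]; lra. }
  pose proof (sqrt_dist1_FussCatalan_le p T th _ Hp HT Hth Hs Hz) as HQ.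
  rewrite Cnorm_z_lam in HQ. fold r in HQ.
  rewrite <- Rpower_mult_distr, <- (Rpower_pow (2 * p - 2) r), Rpower_mult in HQ
    by (try apply pow_lt; lra).
  assert (Hc : 0 <= c) by (unfold c; assert (0 < 1 / INR p) by (apply Rdiv_lt_0_compat; lra); lra).
  pose proof (Rpower_inv_1plus_le r c Hu Hc).
  assert (Er : Rpower r (decay p th) = r * Rpower r (INR (2 * p - 2) * th) * Rpower r (- c)).
  { unfold decay, c. rewrite <- (Rpower_1 r) at 2 by lra. rewrite <- !Rpower_plus. f_equal. }
  unfold g_weighted. rewrite Cnorm_g_lam, Er. fold r c.
  assert (HQ0 : 0 <= sqrt_dist1 (T (z_lam p lam u))) by apply Cnorm_nonneg.
  pose proof (Rpower_pos (/ (1 + r)) c).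
  replace (holder_const p th * Rpower (Cnorm lam) th * (r * Rpower r (INR (2 * p - 2) * th) * Rpower r (- c)))
    with (r * (holder_const p th * (Rpower (Cnorm lam) th * Rpower r (INR (2 * p - 2) * th))) * Rpower r (- c))
    by ring.
  apply Rmult_le_compat; [| lra | apply Rmult_le_compat_l; [lra | exact HQ] | assumption].
  apply Rmult_le_pos; [lra | exact HQ0].
Qed.

Lemma continuous_along_g_weighted p T lam u : is_FussCatalan p T -> in_slit_plane p (z_lam p lam u) ->
  continuous_along (g_weighted p T lam) u.
Proof.
  intros HT Hs phi x Hphi Hx. unfold g_weighted.
  assert (HW : curve_continuous_at (fun t => T (z_lam p lam (phi t))) x).
  { apply (curve_continuous_at_comp T (fun t => z_lam p lam (phi t))).
    - unfold z_lam. apply curve_continuous_at_opp, curve_continuous_at_mul;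
        [apply curve_continuous_at_const | apply curve_continuous_at_pow, Hphi].
    - apply holomorphic_at_continuous. destruct HT as [_ [HH _]]. apply HH. rewrite Hx. exact Hs. }
  pose proof (continuity_pt_Cnorm phi x Hphi). pose proof (Cnorm_nonneg (phi x)).
  apply continuity_pt_mult.
  - apply (continuity_pt_locally_ext (fun t => Cnorm (phi t) * sqrt_dist1 (T (z_lam p lam (phi t)))) _ 1 x Rlt_0_1).
    { intros y _. symmetry. apply Cnorm_g_lam. }
    apply continuity_pt_mult; [assumption | apply continuity_pt_sqrt_dist1, HW].
  - apply continuity_pt_Rpower_comp; [|apply Rinv_0_lt_compat; lra].
    apply continuity_pt_inv; [apply continuity_pt_plus; [apply continuity_pt_cst | assumption] | lra].
Qed.

Definition theta (p : nat) : R := 1 / (4 * INR p ^ 2).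

Lemma theta_bounds p : (2 <= p)%nat -> 0 <= theta p <= 1.
Proof.
  intro Hp. pose proof (INR_ge2 p Hp). unfold theta. split.
  - apply Rmult_le_pos; [lra | left; apply Rinv_0_lt_compat; nra].
  - apply (Rmult_le_reg_r (4 * INR p ^ 2)); [nra|]. unfold Rdiv. rewrite Rmult_assoc, Rinv_l by nra. nra.
Qed.

Lemma decay_theta_lt p : (2 <= p)%nat -> decay p (theta p) < -1.
Proof.
  intro Hp. pose proof (INR_ge2 p Hp). unfold decay, theta. rewrite INR_2p_minus_2 by exact Hp.
  replace ((2 * INR p - 2) * (1 / (4 * INR p ^ 2))) with ((INR p - 1) / (2 * INR p * INR p)) by (field; lra).
  assert ((INR p - 1) / (2 * INR p * INR p) < 1 / INR p).
  { apply (Rmult_lt_reg_r (2 * INR p * INR p)); [nra|].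
    unfold Rdiv. rewrite Rmult_assoc, Rinv_l by nra. field_simplify; nra. }
  lra.
Qed.

(** * Integrals over the keyhole contour *)

Lemma RInt_eq_RiemannInt f a b (pr : Riemann_integrable f a b) : RInt f a b = RiemannInt pr.
Proof.
  unfold RInt.
  destruct (epsilon_spec (inhabits 0) (fun v => exists pr : Riemann_integrable f a b, RiemannInt pr = v)
    (ex_intro _ (RiemannInt pr) (ex_intro _ pr eq_refl))) as [pr' E].
  rewrite <- E. apply RiemannInt_P5.
Qed.

Lemma RInt_le_const f a b c : a <= b -> (forall x, a <= x <= b -> continuity_pt f x) ->
  (forall x, a <= x <= b -> f x <= c) -> RInt f a b <= c * (b - a).
Proof.
  intros Hab Hc Hb. rewrite (RInt_eq_RiemannInt f a b (continuity_implies_RiemannInt Hab Hc)).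
  assert (prc : Riemann_integrable (fct_cte c) a b)
    by (apply continuity_implies_RiemannInt; [|intros; apply continuity_pt_cst]; exact Hab).
  rewrite <- (RiemannInt_P15 prc). apply RiemannInt_P19; [exact Hab|].
  intros x Hx. apply Hb. lra.
Qed.

Section PowerIntegral.
Import Coquelicot.Coquelicot.

Lemma RiemannInt_Rpower_le K e Rr : e < -1 -> 1 < Rr -> 0 <= K ->
  forall pr : Riemann_integrable (fun r => K * Rpower r e) 1 Rr, RiemannInt pr <= K / (- (e + 1)).
Proof.
  intros He HR HK pr.
  set (c := K / (e + 1)).
  assert (E : RiemannInt pr = c * Rpower Rr (e + 1) - c * Rpower 1 (e + 1)).
  { rewrite <- (RInt_Reals _ _ _ pr). apply is_RInt_unique.
    apply (is_RInt_derive (fun r => c * Rpower r (e + 1)));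
      intros x Hx; rewrite Rmin_left, Rmax_right in Hx by lra.
    - apply is_derive_Reals.
      replace (K * Rpower x e) with (c * ((e + 1) * Rpower x (e + 1 - 1)))
        by (unfold c; replace (e + 1 - 1) with e by ring; field; lra).
      apply (derivable_pt_lim_scal (fun r => Rpower r (e + 1))), derivable_pt_lim_power. lra.
    - apply continuity_pt_filterlim.
      apply continuity_pt_mult; [apply continuity_pt_cst | apply continuity_pt_Rpower_comp; [|lra]].
      apply derivable_continuous_pt, derivable_pt_id. }
  rewrite E, Rpower_1_l. unfold c.
  pose proof (Rpower_pos Rr (e + 1)).
  assert (Rpower Rr (e + 1) <= 1)
    by (apply Rle_trans with (Rpower Rr 0); [apply Rle_Rpower; lra | rewrite Rpower_O; lra]).
  replace (K / (e + 1) * Rpower Rr (e + 1) - K / (e + 1) * 1)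
    with (K / (- (e + 1)) * (1 - Rpower Rr (e + 1))) by (field; lra).
  assert (0 <= K / - (e + 1)) by (unfold Rdiv; apply Rmult_le_pos; [lra | left; apply Rinv_0_lt_compat; lra]).
  nra.
Qed.

End PowerIntegral.

Lemma RInt_le_Rpower f K e Rr : e < -1 -> 1 < Rr -> 0 <= K ->
  (forall x, 1 <= x <= Rr -> continuity_pt f x) -> (forall x, 1 <= x <= Rr -> f x <= K * Rpower x e) ->
  RInt f 1 Rr <= K / (- (e + 1)).
Proof.
  intros He HR HK Hc Hb.
  assert (prg : Riemann_integrable (fun r => K * Rpower r e) 1 Rr).
  { apply continuity_implies_RiemannInt; [lra|]. intros x Hx.
    apply continuity_pt_mult; [apply continuity_pt_cst | apply continuity_pt_Rpower_comp; [|lra]].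
    apply derivable_continuous_pt, derivable_pt_id. }
  rewrite (RInt_eq_RiemannInt f 1 Rr (continuity_implies_RiemannInt (Rlt_le 1 Rr HR) Hc)).
  eapply Rle_trans; [|apply (RiemannInt_Rpower_le K e Rr He HR HK prg)].
  apply RiemannInt_P19; [lra|]. intros x Hx. apply Hb. lra.
Qed.

Section Keyhole.

Variables (psi Rr L e : R) (F : CC -> R).
Hypotheses (Hpsi : 0 < psi < PI / 2) (HR : 1 < Rr) (He : e < -1) (HL : 0 <= L).
Hypothesis HF : forall u, 1 <= Cnorm u -> Cnorm u = 1 \/ in_double_sector psi u ->
  continuous_along F u /\ F u <= L * Rpower (Cnorm u) e.

Lemma keyhole_unit_arc_le a b : a <= b -> RInt (fun t => F (polar 1 t)) a b <= L * (b - a).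
Proof.
  intro Hab. assert (H1 : forall t, Cnorm (polar 1 t) = 1) by (intro; rewrite Cnorm_polar; apply Rabs_R1).
  apply RInt_le_const; [exact Hab | ..]; intros x _; destruct (HF (polar 1 x)) as [Hc Hb];
    try (rewrite H1; lra); try (left; apply H1).
  - exact (Hc _ x (curve_continuous_at_polar_t 1 x) eq_refl).
  - rewrite H1, Rpower_1_l, Rmult_1_r in Hb. exact Hb.
Qed.

Lemma keyhole_radial_le t0 : (forall r, 0 < r -> in_double_sector psi (polar r t0)) ->
  RInt (fun r => F (polar r t0)) 1 Rr <= L / (- (e + 1)).
Proof.
  intro Hsec. apply RInt_le_Rpower; try assumption; intros x Hx;
    assert (Hn : Cnorm (polar x t0) = x) by (rewrite Cnorm_polar; apply Rabs_right; lra);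
    destruct (HF (polar x t0)) as [Hc Hb]; try (rewrite Hn; lra); try (right; apply Hsec; lra).
  - exact (Hc _ x (curve_continuous_at_polar_r t0 x) eq_refl).
  - rewrite Hn in Hb. exact Hb.
Qed.

Lemma keyhole_big_arc_le a b : a <= b -> (forall t, a <= t <= b -> in_double_sector psi (polar Rr t)) ->
  RInt (fun t => Rr * F (polar Rr t)) a b <= L * (b - a).
Proof.
  intros Hab Hsec.
  assert (Hn : forall t, Cnorm (polar Rr t) = Rr) by (intro; rewrite Cnorm_polar; apply Rabs_right; lra).
  assert (Hdecay : Rr * Rpower Rr e <= 1).
  { rewrite <- (Rpower_1 Rr) at 1 by lra. rewrite <- Rpower_plus.
    apply Rle_trans with (Rpower Rr 0); [apply Rle_Rpower; lra | rewrite Rpower_O; lra]. }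
  apply RInt_le_const; [exact Hab | ..]; intros x Hx;
    destruct (HF (polar Rr x)) as [Hc Hb]; try (rewrite Hn; lra); try (right; apply Hsec, Hx).
  - apply continuity_pt_mult; [apply continuity_pt_cst|].
    exact (Hc _ x (curve_continuous_at_polar_t Rr x) eq_refl).
  - rewrite Hn in Hb. apply Rle_trans with (Rr * (L * Rpower Rr e)); [apply Rmult_le_compat_l; lra|].
    replace (Rr * (L * Rpower Rr e)) with (L * (Rr * Rpower Rr e)) by ring.
    rewrite <- (Rmult_1_r L) at 2. apply Rmult_le_compat_l; assumption.
Qed.

Lemma keyhole_arclength_le : keyhole_arclength psi Rr F <= L * (4 * PI + 4 / (- (e + 1))).
Proof.
  pose proof PI_RGT_0.
  pose proof (keyhole_unit_arc_le psi (PI - psi) ltac:(lra)).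
  pose proof (keyhole_unit_arc_le (- (PI - psi)) (- psi) ltac:(lra)).
  pose proof (keyhole_radial_le psi (fun r Hr => in_double_sector_polar_0 psi r psi Hr
    ltac:(lra) ltac:(rewrite Rabs_right; lra))).
  pose proof (keyhole_radial_le (- psi) (fun r Hr => in_double_sector_polar_0 psi r (- psi) Hr
    ltac:(lra) ltac:(rewrite Rabs_Ropp, Rabs_right; lra))).
  pose proof (keyhole_radial_le (PI - psi) (fun r Hr => in_double_sector_polar_PI psi r (PI - psi) Hr
    ltac:(lra) ltac:(replace (PI - psi - PI) with (- psi) by ring; rewrite Rabs_Ropp, Rabs_right; lra))).
  pose proof (keyhole_radial_le (- (PI - psi)) (fun r Hr => in_double_sector_polar_mPI psi r (- (PI - psi)) Hr
    ltac:(lra) ltac:(replace (- (PI - psi) + PI) with psi by ring; rewrite Rabs_right; lra))).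
  pose proof (keyhole_big_arc_le (- psi) psi ltac:(lra) (fun t Ht =>
    in_double_sector_polar_0 psi Rr t ltac:(lra) ltac:(lra) ltac:(apply Rabs_le; lra))).
  pose proof (keyhole_big_arc_le (PI - psi) (PI + psi) ltac:(lra) (fun t Ht =>
    in_double_sector_polar_PI psi Rr t ltac:(lra) ltac:(lra) ltac:(apply Rabs_le; lra))).
  unfold keyhole_arclength.
  replace (L * (4 * PI + 4 / - (e + 1))) with (4 * (L * PI) + 4 * (L / - (e + 1))) by (field; lra).
  nra.
Qed.

End Keyhole.

(* The cut radius |lam|^(-1/(2p-2)) (p-1)^(1/2) p^(-p/(2p-2)) is (FC_rho p / |lam|)^(1/(2p-2)). *)
Lemma Cnorm_lt_FC_rho_of_cut_radius p lam : (2 <= p)%nat -> 0 < Cnorm lam ->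
  1 < Rpower (Cnorm lam) (- (1 / (2 * INR p - 2))) * Rpower (INR p - 1) (1 / 2)
        * Rpower (INR p) (- (INR p / (2 * INR p - 2))) ->
  Cnorm lam < FC_rho p.
Proof.
  intros Hp Hl H. pose proof (INR_ge2 p Hp).
  set (n := 2 * INR p - 2) in *.
  assert (Hn : 0 < n) by (unfold n; lra).
  assert (Hp1 : INR p - 1 = INR (p - 1)) by (rewrite minus_INR by lia; simpl; ring).
  assert (H1 := Rlt_Rpower_l 1 _ n Hn (conj Rlt_0_1 H)). clear H. rename H1 into H.
  rewrite Rpower_1_l, <- !Rpower_mult_distr, !Rpower_mult in H
    by (try apply Rmult_lt_0_compat; apply Rpower_pos).
  replace (- (1 / n) * n) with (Ropp 1) in H by (field; lra).
  replace (1 / 2 * n) with (INR (p - 1)) in H by (unfold n; rewrite <- Hp1; field).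
  replace (- (INR p / n) * n) with (- INR p) in H by (field; lra).
  rewrite !Rpower_Ropp, Rpower_1, Hp1, !Rpower_pow in H by (rewrite <- ?Hp1; lra).
  unfold FC_rho. rewrite Hp1.
  assert (0 < INR (p - 1) ^ (p - 1)) by (apply pow_lt; rewrite <- Hp1; lra).
  assert (0 < INR p ^ p) by (apply pow_lt; lra).
  apply (Rmult_lt_compat_r (Cnorm lam)) in H; [|exact Hl].
  replace (/ Cnorm lam * INR (p - 1) ^ (p - 1) * / INR p ^ p * Cnorm lam)
    with (INR (p - 1) ^ (p - 1) / INR p ^ p) in H by (field; lra).
  lra.
Qed.

Theorem mainTheorem5 :
  forall (p : nat) (T : CC -> CC) (eps psi eta : R),
    (2 <= p)%nat ->
    is_FussCatalan p T ->
    0 < eps ->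
    0 < psi < PI / 4 ->
    (forall (lam : CC) (k : Z), lam <> C0 -> Rabs (Carg lam) <= PI - eps ->
       (- (Z.of_nat p) + 2 <= k <= Z.of_nat p - 1)%Z ->
       forall r, 0 < r -> ~ in_double_sector psi (polar r (cut_ray_angle p lam k))) ->
    0 < eta ->
    (forall lam : CC, inP eps eta lam ->
       1 < Rpower (Cnorm lam) (- (1 / (2 * INR p - 2)))
           * Rpower (INR p - 1) (1 / 2)
           * Rpower (INR p) (- (INR p / (2 * INR p - 2)))) ->
    exists Cst : R,
      forall (Rr : R) (lam : CC), 1 < Rr -> inP eps eta lam ->
        keyhole_arclength psi Rr
          (fun u => Cnorm (g_lam p T lam u) * Rpower (/ (1 + Cnorm u)) (2 + 1 / INR p))
        <= Cst * Rpower (Cnorm lam) (1 / (4 * INR p ^ 2)).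
Proof.
  intros p T eps psi eta Hp HT Heps Hpsi Hcut Heta Hsmall.
  exists (holder_const p (theta p) * (4 * PI + 4 / (- (decay p (theta p) + 1)))).
  intros Rr lam HR Hlam.
  pose proof (Cnorm_lt_FC_rho_of_cut_radius p lam Hp (proj1 (proj1 Hlam)) (Hsmall lam Hlam)) as Hrho.
  destruct Hlam as [[Hl _] Harg].
  assert (Hl0 : lam <> C0) by (intro E; rewrite E, Cnorm_C0 in Hl; lra).
  change (keyhole_arclength psi Rr (g_weighted p T lam)
    <= holder_const p (theta p) * (4 * PI + 4 / - (decay p (theta p) + 1)) * Rpower (Cnorm lam) (theta p)).
  rewrite Rmult_comm, <- Rmult_assoc, (Rmult_comm (Rpower _ _)).
  apply keyhole_arclength_le; [pose proof PI_RGT_0; lra | exact HR | apply decay_theta_lt, Hp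
    | apply Rmult_le_pos; [apply holder_const_nonneg | left; apply Rpower_pos] |].
  intros u Hu Hcase.
  assert (Hs : in_slit_plane p (z_lam p lam u)).
  { destruct Hcase as [H1 | Hsec].
    - apply in_slit_plane_of_Cnorm_lt. rewrite Cnorm_z_lam, H1, pow1. lra.
    - assert (Hu0 : u <> C0) by (intro E; rewrite E, Cnorm_C0 in Hu; lra).
      rewrite (polar_Cnorm_Carg u Hu0) in Hsec |- *.
      apply (in_slit_plane_z_lam_sector p eps psi); [exact Hp | exact Hcut | exact Hl0 | lra | lra | exact Hsec]. }
  split; [apply continuous_along_g_weighted; assumption|].
  apply g_weighted_le; [exact Hp | exact HT | apply theta_bounds, Hp | exact Hl | exact Hu | exact Hs].
Qed.
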